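(* Let $m\geq 3$ be an odd integer, let $g:\mathrm{GF}(2^m)\to\mathrm{GF}(2^m)$ be an almost bent function with $g(0)=0$, let $A$ be an additive subgroup of $(\mathrm{GF}(2^m),+)$ of order $2^r$ with $1\le r\le m$, let $$\mathcal{C}_{(g,A)}=\{(\mathrm{Tr}_1^m(ag(x)+bx))_{x\in \mathrm{GF}(2^m)^*}: a\in A,\ b\in \mathrm{GF}(2^m)\},$$ and let $\mathcal{D}=\overline{\mathcal{C}_{(g,A)}^\perp}^\perp$, a binary code of length $2^m$ whose coordinates are indexed by $\mathcal{P}=\{0,1,\dots,2^m-1\}$. Its weight distribution is: $A_0=1$, $A_{2^{m-1}-2^{(m-1)/2}}=2^{m-1}(2^r-1)$, $A_{2^{m-1}}=2^{m+r}+2^m-2$, $A_{2^{m-1}+2^{(m-1)/2}}=2^{m-1}(2^r-1)$, $A_{2^m}=1$, and $A_k=0$ otherwise. For any $k$ with $A_k\ne0$, let $\mathcal{B}$ be the set of supports of the codewords of $\mathcal{D}$ of Hamming weight $k$. If $r=m$, then $(\mathcal{P},\mathcal{B})$ is a $3$-$(2^m,k,\lambda)$ design with $$\lambda=\frac{k(k-1)(k-2)A_k}{2^m(2^m-1)(2^m-2)}.$$ If $r\neq m$, then $(\mathcal{P},\mathcal{B})$ is a $1$-$(2^m,k,\lambda)$ design with $\lambda=\frac{kA_k}{2^m}$.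
   Context: $\mathrm{Tr}_1^m$ is the absolute trace from $\mathrm{GF}(2^m)$ to $\mathrm{GF}(2)$. A function $g:\mathrm{GF}(2^m)\to\mathrm{GF}(2^m)$ is almost bent if $\sum_{x\in\mathrm{GF}(2^m)}(-1)^{\mathrm{Tr}_1^m(ag(x)+bx)}\in\{0,\pm2^{(m+1)/2}\}$ for all $a\neq0$, $b$. For a binary linear code $\mathcal{C}$ of length $n$, $\mathcal{C}^\perp$ is its dual and $\overline{\mathcal{C}}$ is its extended code of length $n+1$, obtained by appending the overall parity coordinate $\sum_i c_i$ to each codeword. The support of a codeword $c=(c_0,\dots,c_{n-1})$ is $\{i: c_i\neq 0\}$. A $t$-$(n,k,\lambda)$ design is a pair $(\mathcal{P},\mathcal{B})$ where $\mathcal{P}$ is a set of $n$ points and $\mathcal{B}$ a set of $k$-subsets of $\mathcal{P}$ (blocks) such that every $t$-subset of $\mathcal{P}$ is contained in exactly $\lambda$ blocks. *)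

From HB Require Import structures.
From mathcomp Require Import all_boot all_order all_algebra all_field.
Set Implicit Arguments. Unset Strict Implicit. Unset Printing Implicit Defensive.
Import GRing.Theory Num.Theory.
Local Open Scope ring_scope.

Definition trF (F : finFieldType) (m : nat) (x : F) : F :=
  \sum_(i < m) x ^+ (2 ^ i).

(* The trace as an element of GF(2) = 'F_2 (it is 0 or 1 in F). *)
Definition tr2 (F : finFieldType) (m : nat) (x : F) : 'F_2 :=
  if trF m x == 0 then 0 else 1.

Definition walsh (F : finFieldType) (m : nat) (g : F -> F) (a b : F) : int :=
  \sum_(x : F) (if trF m (a * g x + b * x) == 0 then 1 else -1).

Definition almost_bent (F : finFieldType) (m : nat) (g : F -> F) : Prop :=
  forall a b : F, a != 0 ->
    walsh m g a b \in [:: 0; (2 ^ (m.+1 %/ 2))%:Z; - (2 ^ (m.+1 %/ 2))%:Z].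

Definition word (I : finType) := {ffun I -> 'F_2}.

Definition dotw (I : finType) (x y : word I) : 'F_2 := \sum_(i : I) x i * y i.

Definition dual_code (I : finType) (C : {set word I}) : {set word I} :=
  [set y : word I | [forall x in C, dotw x y == 0]].

(* Extension by the overall parity coordinate, indexed by None. *)
Definition extend_word (I : finType) (c : word I) : word (option I) :=
  [ffun o => match o with Some i => c i | None => \sum_(i : I) c i end].

Definition extended_code (I : finType) (C : {set word I}) : {set word (option I)} :=
  [set extend_word c | c in C].

Definition support (I : finType) (c : word I) : {set I} := [set i | c i != 0].
Definition wt (I : finType) (c : word I) : nat := #|support c|.

Definition wdist (I : finType) (C : {set word I}) (k : nat) : nat :=
  #|[set c in C | wt c == k]|.

Definition blocks (I : finType) (C : {set word I}) (k : nat) : {set {set I}} :=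
  [set support c | c in C & wt c == k].

Definition nzF (F : finFieldType) := {x : F | x != 0}.

Definition cw (F : finFieldType) (m : nat) (g : F -> F) (a b : F) : word (nzF F) :=
  [ffun x : nzF F => tr2 m (a * g (val x) + b * val x)].

Definition code_gA (F : finFieldType) (m : nat) (g : F -> F) (A : {set F})
  : {set word (nzF F)} :=
  [set cw m g a b | a in A, b in F].

Definition code_D (F : finFieldType) (m : nat) (g : F -> F) (A : {set F})
  : {set word (option (nzF F))} :=
  dual_code (extended_code (dual_code (code_gA m g A))).

(* Write n = 2^m and s = 2^((m+1)/2).  The words of D are x |-> Tr(a g(x) + b x) + t on
   GF(2^m), with a in A, b in GF(2^m), t in GF(2), the parity coordinate playing the point 0;
   their biases n - 2 wt are (-1)^t W_g(a, b), which lie in {0, +-s} for a != 0 and in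
   {0, +-n} for a = 0.  Counting the values of these biases, with Parseval, gives the weight
   distribution.  The number of weight-k codewords whose support contains a point set S is a
   signed combination of character sums over D.  For |S| = 1 these sums do not depend on S.
   For |S| = 3 and A = GF(2^m) they involve the derivative equations g(z) + g(z + u) = c,
   whose solution sets all have size 0 or 2, because the fourth moment of the Walsh spectrum
   of an almost bent function forces g to be APN.  So the count is independent of S, and
   double counting gives lambda. *)

From Pilot Require Import Defs.
From HB Require Import structures.
From mathcomp Require Import all_boot all_order all_algebra all_field.
From mathcomp Require Import zify ring.
Import GRing.Theory Num.Theory.
Set Implicit Arguments. Unset Strict Implicit. Unset Printing Implicit Defensive.
Local Open Scope ring_scope.

Lemma F2_cases (t : 'F_2) : t = 0 \/ t = 1.
Proof. by case: t => [[|[|k]] lt_t2]; [left|right|]; try exact: val_inj. Qed.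

Lemma F2_neq0 (t : 'F_2) : t != 0 -> t = 1.
Proof. by case: (F2_cases t) => ->. Qed.

Lemma big_F2 (V : nmodType) (f : 'F_2 -> V) : \sum_t f t = f 0 + f 1.
Proof.
rewrite big_ord_recl big_ord_recl big_ord0 addr0.
by congr (f _ + f _); apply: val_inj.
Qed.

Lemma pchar2_F2 : 2%N \in [pchar 'F_2].
Proof. exact: pchar_Fp. Qed.

Definition sgn2 (t : 'F_2) : int := if t == 0 then 1 else -1.

Lemma sgn2_0 : sgn2 0 = 1. Proof. by []. Qed.
Lemma sgn2_1 : sgn2 1 = -1. Proof. by []. Qed.

Lemma sgn2D t u : sgn2 (t + u) = sgn2 t * sgn2 u.
Proof. by case: (F2_cases t) => ->; case: (F2_cases u) => ->. Qed.

Lemma sgn2E t : sgn2 t = 1 - 2 * (t != 0)%:Z.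
Proof. by case: (F2_cases t) => ->. Qed.

Lemma sum_sign_reversing_eq0 (T : finType) (P : pred T) (f : T -> int) (s : T -> T) :
  injective s -> (forall x, P (s x) = P x) -> (forall x, f (s x) = - f x) ->
  \sum_(x | P x) f x = 0.
Proof.
move=> s_inj Ps fs.
have : \sum_(x | P x) f x = - \sum_(x | P x) f x.
  rewrite {1}(reindex_inj s_inj) /= -sumrN.
  by apply: eq_big => x; rewrite ?Ps // => _; rewrite fs.
lia.
Qed.

Lemma card_setZ (T : finType) (P : pred T) : #|[set x | P x]|%:Z = \sum_x (P x)%:Z.
Proof.
rewrite -sum1_card (big_morph Posz PoszD (erefl _)) big_mkcond.
by apply: eq_bigr => x _; rewrite inE; case: (P x).
Qed.

Lemma card_setIdZ (T : finType) (D : {set T}) (Q : pred T) :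
  #|[set x in D | Q x]|%:Z = \sum_(x in D) (Q x)%:Z.
Proof. by rewrite card_setZ [RHS]big_mkcond; apply: eq_bigr => x _; case: (x \in D). Qed.

Lemma big_option (I : finType) (V : nmodType) (f : option I -> V) :
  \sum_o f o = f None + \sum_i f (Some i).
Proof.
rewrite (bigD1 None) //=; congr (_ + _).
rewrite -(big_imset _ (in2W (@Some_inj _))) /=.
apply: eq_bigl => -[i|] /=; last by apply/esym/imsetP => -[].
by apply/esym/imsetP; exists i.
Qed.

(** * Binary linear codes and the designs of their supports *)

Section BinaryCodes.
Variable I : finType.
Implicit Types (x y z c : word I) (C : {set word I}).

Lemma dotwC x y : dotw x y = dotw y x.
Proof. by apply: eq_bigr => i _; rewrite mulrC. Qed.

Lemma dotwDl x y z : dotw (x + y) z = dotw x z + dotw y z.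
Proof. by rewrite /dotw -big_split; apply: eq_bigr => i _; rewrite ffunE mulrDl. Qed.

Lemma dotw0l y : dotw 0 y = 0.
Proof. by rewrite /dotw big1 // => i _; rewrite ffunE mul0r. Qed.

Lemma addww c : c + c = 0.
Proof. by apply/ffunP => i; rewrite !ffunE (addrr_pchar2 pchar2_F2). Qed.

Definition linear_code C := 0 \in C /\ forall x y, x \in C -> y \in C -> x + y \in C.

Lemma dual_code_linear C : linear_code (dual_code C).
Proof.
split; first by rewrite inE; apply/forall_inP => x _; rewrite dotwC dotw0l.
move=> y z; rewrite !inE => /forall_inP Hy /forall_inP Hz; apply/forall_inP => x xC.
by rewrite dotwC dotwDl !(dotwC _ x) (eqP (Hy x xC)) (eqP (Hz x xC)) addr0.
Qed.

Lemma card_word : #|word I| = (2 ^ #|I|)%N.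
Proof. by rewrite card_ffun card_Fp. Qed.

Lemma sum_sgn2_dot_code C y : linear_code C ->
  \sum_(c in C) sgn2 (dotw c y) = if y \in dual_code C then #|C|%:Z else 0.
Proof.
move=> [C0 CD]; case: ifPn => [|].
  rewrite inE => /forall_inP Cy.
  rewrite (eq_bigr (fun _ => 1)); first by rewrite sumr_const natz.
  by move=> c cC; rewrite (eqP (Cy c cC)).
rewrite inE negb_forall_in => /exists_inP [c0 c0C /F2_neq0 c0y].
apply: (@sum_sign_reversing_eq0 _ (mem C) _ (+%R^~ c0)); first exact: addIr.
  move=> c /=; apply/idP/idP => [|cC]; last exact: CD.
  by move/(CD _ _)/(_ c0C); rewrite -addrA addww addr0.
by move=> c; rewrite dotwDl sgn2D c0y sgn2_1 mulrN1.
Qed.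

Lemma sum_sgn2_dot_words c :
  \sum_(y : word I) sgn2 (dotw c y) = if c == 0 then (2 ^ #|I|)%N%:Z else 0.
Proof.
have [->|c_nz] := eqVneq c 0.
  under eq_bigr => y _ do rewrite dotw0l.
  by rewrite sumr_const natz card_word.
have [i ci] : exists i, c i != 0.
  apply/existsP; apply: contraNT c_nz; rewrite negb_exists => /forallP c0.
  by apply/eqP/ffunP => i; rewrite ffunE; apply/eqP/negbNE/c0.
pose d : word I := [ffun j => (j == i)%:R].
have cd : dotw c d = 1.
  rewrite /dotw (bigD1 i) //= big1 ?addr0 => [|j /negbTE ji].
    by rewrite ffunE eqxx mulr1 (F2_neq0 ci).
  by rewrite ffunE ji mulr0.
apply: (@sum_sign_reversing_eq0 _ predT (fun y => sgn2 (dotw c y)) (+%R^~ d)) => // [|y]; first exact: addIr.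
by rewrite dotwC dotwDl sgn2D !(dotwC _ c) cd sgn2_1 mulrN1.
Qed.

Lemma card_code_dual C : linear_code C -> (#|C| * #|dual_code C|)%N = (2 ^ #|I|)%N.
Proof.
move=> linC; apply/eqP; rewrite -eqz_nat; apply/eqP.
transitivity (\sum_(y : word I) \sum_(c in C) sgn2 (dotw c y)).
  under eq_bigr => y _ do rewrite sum_sgn2_dot_code //.
  by rewrite -big_mkcond /= sumr_const -mulr_natr natz -PoszM mulnC.
rewrite exchange_big /=.
under eq_bigr => c _ do rewrite sum_sgn2_dot_words.
rewrite (bigD1 (0 : word I)) ?eqxx //=; last by case: linC.
by rewrite big1 ?addr0 // => c /andP [_ /negbTE ->].
Qed.

Lemma dual_codeK C : linear_code C -> dual_code (dual_code C) = C.
Proof.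
move=> linC; apply/esym/eqP; rewrite eqEcard; apply/andP; split.
  apply/subsetP => c cC; rewrite inE; apply/forall_inP => y.
  by rewrite inE => /forall_inP Hy; rewrite dotwC Hy.
have dual_gt0 : (0 < #|dual_code C|)%N.
  by apply/card_gt0P; exists 0; case: (dual_code_linear C).
rewrite -(leq_pmul2l dual_gt0) [X in (_ <= X)%N]mulnC.
by rewrite (card_code_dual (dual_code_linear C)) card_code_dual.
Qed.

End BinaryCodes.

Section Blocks.
Variable I : finType.
Implicit Types (C : {set word I}) (S : {set I}).

Lemma support_inj : injective (@Defs.support I).
Proof.
move=> c c' eq_cc'; apply/ffunP => i.
have := congr1 (fun S => i \in S) eq_cc'; rewrite /= !inE.
by case: (F2_cases (c i)) => ->; case: (F2_cases (c' i)) => ->.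
Qed.

Lemma blocks_card C k b : b \in blocks C k -> #|b| = k.
Proof. by case/imsetP => c; rewrite inE => /andP [_ /eqP <-] ->. Qed.

Lemma card_blocks C k : #|blocks C k| = wdist C k.
Proof.
rewrite (card_in_imset (in2W support_inj)).
by apply: eq_card => c; rewrite !inE.
Qed.

Lemma card_blocks_supset C k S :
  #|[set b in blocks C k | S \subset b]| =
  #|[set c in C | (wt c == k) && (S \subset Defs.support c)]|.
Proof.
rewrite -(card_imset _ support_inj); apply: eq_card => b.
rewrite inE; apply/andP/imsetP => [[/imsetP [c cCk ->] Sc]|[c]].
  by exists c => //; rewrite !inE in cCk *; case/andP: cCk => -> ->.
rewrite inE => /and3P [cC wk Sc] ->; split => //.
by apply: imset_f; rewrite inE cC.
Qed.

End Blocks.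

Lemma cards3P (T : finType) (S : {set T}) : #|S| = 3%N ->
  exists p q r, [/\ p != q, p != r, q != r & S = [set p; q; r]].
Proof.
move=> S3; have /card_gt0P [p pS] : (0 < #|S|)%N by rewrite S3.
have /cards2P [q [r [qr Sp]]] : #|S :\ p| == 2%N.
  by have := cardsD1 p S; rewrite pS S3 add1n => -[->].
have : (q \in S :\ p) && (r \in S :\ p) by rewrite Sp !inE !eqxx orbT.
rewrite !inE => /andP [/andP [qp _] /andP [rp _]].
exists p, q, r; split; rewrite 1?[p == _]eq_sym //.
by rewrite -(setD1K pS) Sp setUA.
Qed.

Lemma design_double_count (T : finType) (B : {set {set T}}) (t k : nat) :
  (forall b, b \in B -> #|b| = k) ->
  (forall S S' : {set T}, #|S| = t -> #|S'| = t ->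
     #|[set b in B | S \subset b]| = #|[set b in B | S' \subset b]|) ->
  forall S : {set T}, #|S| = t ->
  (#|[set b in B | S \subset b]| * 'C(#|T|, t) = #|B| * 'C(k, t))%N.
Proof.
move=> Bk uniform S St.
pose N (S' : {set T}) := #|[set b in B | S' \subset b]|.
transitivity (\sum_(S' : {set T} | #|S'| == t) N S')%N.
  rewrite (eq_bigr (fun _ => N S)) => [|S' /eqP St']; last exact: uniform.
  by rewrite sum_nat_const -card_draws mulnC; congr (_ * _); apply: eq_card => S'; rewrite inE.
transitivity (\sum_(b in B) \sum_(S' : {set T} | #|S'| == t) (S' \subset b : nat))%N.
  rewrite exchange_big; apply: eq_bigr => S' _ /=.
  rewrite /N -sum1_card big_mkcond [RHS]big_mkcond; apply: eq_bigr => b _.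
  by rewrite inE; case: (b \in B); case: (S' \subset b).
rewrite -sum_nat_const; apply: eq_bigr => b bB.
rewrite -(Bk b bB) -cards_draws -sum1_card big_mkcond [RHS]big_mkcond.
by apply: eq_bigr => S' _; rewrite inE; case: (#|S'| == t); case: (S' \subset b).
Qed.

Lemma natr_divE (l x y : nat) : (0 < y)%N -> (l * y)%N = x -> (l%:R : rat) = x%:R / y%:R.
Proof. by move=> y_gt0 <-; rewrite natrM mulfK // pnatr_eq0 -lt0n. Qed.

Lemma ffact3E x : (x * (x - 1) * (x - 2) = 'C(x, 3) * 6)%N.
Proof.
rewrite (_ : 6 = 3`!)%N // bin_ffact !ffactnS ffactn0 muln1 mulnA.
by rewrite -!subn1 -subnDA.
Qed.

Lemma weight_distribution_arith (N2 H R k : nat) : (0 < H < N2)%N -> (0 < R)%N ->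
  let n := (2 * N2)%N%:Z in let v := n - 2 * k%:Z in
  (v == n)%:Z + (v == - n)%:Z + 2 * (v == 0)%:Z * (n - 1) +
  (R%:Z - 1) * (2 * (v == 0)%:Z * n +
                ((v == (2 * H)%N%:Z)%:Z + (v == - (2 * H)%N%:Z)%:Z - 2 * (v == 0)%:Z) * N2%:Z) =
  (if k == 0 then 1
   else if k == N2 - H then N2 * (R - 1)
   else if k == N2 then 2 * N2 * R + 2 * N2 - 2
   else if k == N2 + H then N2 * (R - 1)
   else if k == 2 * N2 then 1
   else 0)%N%:Z.
Proof.
move=> /andP [H_gt0 H_lt] R_gt0 n v; rewrite {}/v {}/n !mulnBr !muln1.
have : (N2 <= N2 * R)%N by rewrite leq_pmulr.
by repeat case: ifP => /eqP ?; repeat case: eqP => ?; lia.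
Qed.

Section ThreeValued.
Variables (s w v : int).
Hypothesis w3 : [|| w == 0, w == s | w == - s].

Lemma sum_sgn2_indicator_odd :
  s * \sum_t (sgn2 t * w == v)%:Z * sgn2 t = ((v == s)%:Z - (v == - s)%:Z) * w.
Proof.
rewrite big_F2 sgn2_0 sgn2_1 !mul1r !mulN1r !mulr1.
by case/or3P: w3 => /eqP ->; rewrite ?oppr0 ?opprK ![_ == v]eq_sym; ring.
Qed.

Lemma sum_sgn2_indicator_even :
  s * s * \sum_t (sgn2 t * w == v)%:Z =
  2 * s * s * (v == 0)%:Z + ((v == s)%:Z + (v == - s)%:Z - 2 * (v == 0)%:Z) * w ^+ 2.
Proof.
rewrite big_F2 sgn2_0 sgn2_1 !mul1r !mulN1r.
by case/or3P: w3 => /eqP ->; rewrite ?oppr0 ?opprK ![_ == v]eq_sym; ring.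
Qed.

End ThreeValued.

(** * The trace and the additive character of GF(2^m) *)

Section CharTwoField.
Variables (F : finFieldType) (m : nat).
Hypotheses (cardF : #|F| = (2 ^ m)%N) (m_gt0 : (0 < m)%N).

Lemma pchar2F : 2%N \in [pchar F].
Proof. exact: card_finPcharP cardF _. Qed.

Let addxx := addrr_pchar2 pchar2F.

Local Notation n := (#|F|%:Z).

Lemma n_gt0 : (0 < #|F|)%N.
Proof. by rewrite cardF expn_gt0. Qed.

Lemma sumF_const (c : int) : \sum_(x : F) c = c * n.
Proof. by rewrite sumr_const -[c *+ _]mulr_natr natz. Qed.

Lemma sum_neq0_const (c : int) : \sum_(a : F | a != 0) c = c * (n - 1).
Proof.
by rewrite sumr_const cardC1 -mulr_natr natz predn_int ?n_gt0.
Qed.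


Lemma eqF_add0 (x y : F) : (x + y == 0) = (x == y).
Proof. by rewrite addr_eq0 (oppr_pchar2 pchar2F). Qed.

Lemma exprD_pow2 (x y : F) i : (x + y) ^+ (2 ^ i) = x ^+ (2 ^ i) + y ^+ (2 ^ i).
Proof. by rewrite exprDn_pchar // pnatX pnatE // pchar2F. Qed.

Lemma trFD (x y : F) : trF m (x + y) = trF m x + trF m y.
Proof. by rewrite /trF -big_split; apply: eq_bigr => i _; rewrite exprD_pow2. Qed.

Lemma trF0 : trF m (0 : F) = 0.
Proof. by rewrite /trF big1 // => i _; rewrite expr0n expn_eq0. Qed.

Lemma trF_sqr (x : F) : trF m x ^+ 2 = trF m x.
Proof.
rewrite /trF -(pFrobenius_autE pchar2F) rmorph_sum /=.
under eq_bigr => i _ do rewrite pFrobenius_autE -exprM -expnSr.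
rewrite -(prednK m_gt0) big_ord_recr [RHS]big_ord_recl /= prednK //.
by rewrite -cardF expf_card expn0 expr1 addrC.
Qed.

Lemma trF_bool (x : F) : (trF m x == 0) || (trF m x == 1).
Proof.
have : trF m x * (trF m x - 1) == 0 by rewrite mulrBr mulr1 -expr2 trF_sqr subrr.
by rewrite mulf_eq0 subr_eq0.
Qed.

Lemma size_trace_poly k : size (\sum_(i < k.+1) 'X^(2 ^ i) : {poly F}) = (2 ^ k).+1.
Proof.
elim: k => [|k IHk]; first by rewrite big_ord1 size_polyXn.
rewrite big_ord_recr /= addrC size_polyDl size_polyXn // IHk ltnS ltn_exp2l //.
Qed.

(* A nonzero polynomial of degree 2^(m-1) cannot vanish on all 2^m elements. *)
Lemma trF_neq0 : exists c : F, trF m c != 0.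
Proof.
apply/existsP; apply: contraT; rewrite negb_exists => /forallP tr0.
pose P : {poly F} := \sum_(i < m) 'X^(2 ^ i).
have sizeP : size P = (2 ^ m.-1).+1 by rewrite /P -(prednK m_gt0) size_trace_poly.
have P_nz : P != 0 by rewrite -size_poly_eq0 sizeP.
have rootsP : all (root P) (enum F).
  apply/allP => x _; rewrite rootE /P horner_sum.
  under eq_bigr => i _ do rewrite hornerXn.
  exact/negbNE/tr0.
have := max_poly_roots P_nz rootsP (enum_uniq F).
rewrite -cardE cardF sizeP -(prednK m_gt0) expnS prednK // ltnS.
by rewrite leqNgt ltn_Pmull ?expn_gt0.
Qed.

Definition chi (x : F) : int := if trF m x == 0 then 1 else -1.

Lemma chiD (x y : F) : chi (x + y) = chi x * chi y.
Proof.
rewrite /chi trFD.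
by case/orP: (trF_bool x) => /eqP->; case/orP: (trF_bool y) => /eqP->;
  rewrite ?addr0 ?add0r ?addxx ?eqxx ?oner_eq0.
Qed.

Lemma chi0 : chi 0 = 1.
Proof. by rewrite /chi trF0 eqxx. Qed.

Lemma chi_sqr (x : F) : chi x * chi x = 1.
Proof. by rewrite /chi; case: ifP. Qed.

Lemma sum_chi : \sum_(x : F) chi x = 0.
Proof.
have [c trc] := trF_neq0.
apply: (@sum_sign_reversing_eq0 _ predT _ (+%R^~ c)) => // [|x]; first exact: addIr.
by rewrite chiD /chi (negbTE trc) mulrN1.
Qed.

Lemma sum_chi_mul (u : F) : \sum_b chi (b * u) = if u == 0 then n else 0.
Proof.
have [->|u_nz] := eqVneq u 0.
  by under eq_bigr => b _ do rewrite mulr0 chi0; rewrite sumF_const mul1r.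
by rewrite -[RHS]sum_chi [RHS](reindex_inj (mulIf u_nz)).
Qed.

Lemma sum_neq0_chi (u : F) :
  \sum_(b | b != 0) chi (b * u) = (if u == 0 then n else 0) - 1.
Proof. by rewrite -sum_chi_mul [in RHS](bigD1 0) //= mul0r chi0 addrC addrK. Qed.

Lemma tr2D (x y : F) : tr2 m (x + y) = tr2 m x + tr2 m y.
Proof.
rewrite /tr2 trFD.
case/orP: (trF_bool x) => /eqP->; case/orP: (trF_bool y) => /eqP->;
  by rewrite ?addr0 ?add0r ?addxx ?eqxx ?oner_eq0 //; apply/eqP.
Qed.

Lemma tr2_0 : tr2 m (0 : F) = 0.
Proof. by rewrite /tr2 trF0 eqxx. Qed.

Lemma sgn2_tr2 (x : F) : sgn2 (tr2 m x) = chi x.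
Proof. by rewrite /tr2 /chi; case: ifP. Qed.

Definition fourier (h : F -> int) (b : F) : int := \sum_u chi (b * u) * h u.

Lemma fourierK (h : F -> int) (x : F) :
  \sum_b fourier h b * chi (b * x) = n * h x.
Proof.
under eq_bigr => b _ do rewrite /fourier mulr_suml.
rewrite exchange_big /= (bigD1 x) //= [X in _ + X]big1 ?addr0 => [|u /negbTE ux].
  under eq_bigr => b _ do rewrite mulrAC -chiD -mulrDr addxx mulr0 chi0 mul1r.
  by rewrite sumF_const mulrC.
under eq_bigr => b _ do rewrite mulrAC -chiD -mulrDr.
by rewrite -mulr_suml sum_chi_mul eqF_add0 ux mul0r.
Qed.

Lemma parseval (h : F -> int) :
  \sum_b fourier h b ^+ 2 = n * \sum_u h u ^+ 2.
Proof.
under eq_bigr => b _ do rewrite expr2 {2}/fourier mulr_sumr.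
rewrite exchange_big /= mulr_sumr; apply: eq_bigr => u _.
under eq_bigr => b _ do rewrite mulrA.
by rewrite -mulr_suml fourierK expr2 mulrA.
Qed.

(** * The Walsh spectrum of an almost bent function *)

Section AlmostBent.
Variable g : F -> F.
Hypotheses (m_gt2 : (2 < m)%N) (m_odd : odd m) (g_ab : almost_bent m g).

Local Notation s := ((2 ^ (m.+1 %/ 2))%N%:Z).
Local Notation W := (walsh m g).

Lemma s_sqr : s * s = 2 * n.
Proof.
have half : (m.+1 %/ 2 + m.+1 %/ 2 = m.+1)%N by have := modn2 m; rewrite m_odd; lia.
by rewrite -PoszM -expnD half expnS cardF PoszM.
Qed.

Lemma s_lt_n : (2 ^ (m.+1 %/ 2) < #|F|)%N.
Proof. by rewrite cardF ltn_exp2l //; lia. Qed.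

Lemma walsh_fourier (a b : F) : W a b = fourier (fun x => chi (a * g x)) b.
Proof. by apply: eq_bigr => x _; rewrite -chiD addrC. Qed.

Lemma walsh0 (b : F) : W 0 b = if b == 0 then n else 0.
Proof.
rewrite /walsh; under eq_bigr => x _ do rewrite mul0r add0r mulrC.
exact: sum_chi_mul.
Qed.

Lemma walsh_vals (a b : F) : a != 0 -> [|| W a b == 0, W a b == s | W a b == - s].
Proof. by move/(g_ab b); rewrite !inE. Qed.

Lemma walsh_sqr_vals (a b : F) : a != 0 -> (W a b == 0) || (W a b ^+ 2 == s * s).
Proof. by move/(walsh_vals b); case/or3P => /eqP ->; rewrite ?sqrrN expr2 eqxx ?orbT. Qed.

Lemma sum_walsh_sqr (a : F) : \sum_b W a b ^+ 2 = n * n.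
Proof.
under eq_bigr => b _ do rewrite walsh_fourier.
by rewrite parseval; under eq_bigr => x _ do rewrite expr2 chi_sqr; rewrite sumF_const mul1r.
Qed.

Definition autocorr (a u : F) : int := \sum_x chi (a * g x) * chi (a * g (x + u)).

Lemma autocorrE (a u : F) : autocorr a u = \sum_x chi (a * (g x + g (x + u))).
Proof. by apply: eq_bigr => x _; rewrite mulrDr chiD. Qed.

Lemma autocorr0 (a : F) : autocorr a 0 = n.
Proof.
by rewrite /autocorr; under eq_bigr => x _ do rewrite addr0 chi_sqr; rewrite sumF_const mul1r.
Qed.

Lemma walsh_sqr (a b : F) : W a b ^+ 2 = fourier (autocorr a) b.
Proof.
rewrite walsh_fourier expr2 /fourier mulr_suml.
under eq_bigr => x _ do rewrite mulr_sumr (reindex_inj (addrI x)) /=.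
rewrite exchange_big /=; apply: eq_bigr => u _.
rewrite mulr_sumr; apply: eq_bigr => x _.
rewrite mulrDr chiD.
transitivity (chi (b * x) * chi (b * x) *
  (chi (b * u) * (chi (a * g x) * chi (a * g (x + u))))); first ring.
by rewrite chi_sqr mul1r.
Qed.

Lemma sum_walsh4 : \sum_a \sum_b W a b ^+ 4 = n ^+ 4 + (n - 1) * (s * s) * (n * n).
Proof.
rewrite (bigD1 0) //= (bigD1 0) //= walsh0 eqxx big1 ?addr0 => [|b /negbTE b_nz]; last first.
  by rewrite walsh0 b_nz expr0n.
congr (_ + _); rewrite -[RHS]mulrA mulrC -sum_neq0_const.
apply: eq_bigr => a a_nz; rewrite -(sum_walsh_sqr a) mulr_sumr; apply: eq_bigr => b _.
case/orP: (walsh_sqr_vals b a_nz) => /eqP Wab; last by rewrite -Wab -exprD.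
by rewrite Wab !expr0n mulr0.
Qed.

Lemma walsh_eq_n (a b : F) : W a b = n -> a = 0 /\ b = 0.
Proof.
move=> Wn; have a0 : a = 0.
  have := s_lt_n; apply: contraTeq => /(walsh_vals b); rewrite Wn.
  by case/or3P => /eqP; lia.
split=> //; move: Wn; rewrite a0 walsh0.
by have := n_gt0; case: eqP => // _; lia.
Qed.

Definition ndiff (u x : F) : nat := #|[set y | g y + g (y + u) == g x + g (x + u)]|.

Lemma sum_walsh4_ndiff : \sum_a \sum_b W a b ^+ 4 = n * n * \sum_u \sum_x (ndiff u x)%:Z.
Proof.
transitivity (\sum_a n * \sum_u autocorr a u ^+ 2).
  apply: eq_bigr => a _; rewrite -parseval; apply: eq_bigr => b _.
  by rewrite -walsh_sqr -exprM.
rewrite -mulr_sumr exchange_big /= -mulrA; congr (_ * _).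
rewrite mulr_sumr; apply: eq_bigr => u _.
transitivity (\sum_a \sum_x \sum_y chi (a * ((g x + g (x + u)) + (g y + g (y + u))))).
  apply: eq_bigr => a _; rewrite autocorrE expr2 mulr_suml; apply: eq_bigr => x _.
  by rewrite mulr_sumr; apply: eq_bigr => y _; rewrite -chiD -mulrDr.
rewrite exchange_big /= mulr_sumr; apply: eq_bigr => x _.
rewrite exchange_big /=; under eq_bigr => y _ do rewrite sum_chi_mul eqF_add0 eq_sym.
by rewrite -big_mkcond /= sumr_const -mulr_natr natz /ndiff cardsE.
Qed.

Lemma ndiff0 (x : F) : ndiff 0 x = #|F|.
Proof.
rewrite /ndiff (eq_finset (fun _ => true)) ?cardsT // => y.
by rewrite !addr0 !addxx eqxx.
Qed.

Lemma ndiff_ge2 (u x : F) : u != 0 -> (2 <= ndiff u x)%N.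
Proof.
move=> u_nz; have <- : #|[set x; x + u]| = 2%N.
  by rewrite cards2 -[X in X != _]addr0 (inj_eq (addrI x)) eq_sym u_nz.
apply: subset_leq_card; apply/subsetP => y; rewrite !inE => /orP[] /eqP -> //.
by rewrite -addrA addxx addr0 addrC.
Qed.

Lemma sum_ndiff : \sum_u \sum_x (ndiff u x)%:Z = n * n + (n - 1) * (2 * n).
Proof.
apply: (@mulfI _ (n * n)); first by rewrite mulf_eq0 orbb; have := n_gt0; lia.
by rewrite -sum_walsh4_ndiff sum_walsh4 s_sqr; ring.
Qed.

(* The fourth moment of the Walsh spectrum, fixed by [g_ab], leaves no room for a
   fibre of size > 2. *)
Lemma ab_apn (u x : F) : u != 0 -> ndiff u x = 2%N.
Proof.
move=> u_nz.
have excess_ge0 v y : v != 0 -> 0 <= (ndiff v y)%:Z - 2.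
  by move=> v_nz; have := ndiff_ge2 y v_nz; lia.
have excess0 : \sum_(v | v != 0) \sum_y ((ndiff v y)%:Z - 2) = 0.
  under eq_bigr => v _ do rewrite sumrB sumF_const.
  rewrite sumrB sum_neq0_const.
  have := sum_ndiff; rewrite (bigD1 0) //=.
  under eq_bigr => y _ do rewrite ndiff0.
  by rewrite sumF_const => /(addrI (n * n)) ->; ring.
have := psumr_eq0P (fun v v_nz => sumr_ge0 _ (fun y _ => excess_ge0 v y v_nz)) excess0 u_nz.
move=> /(psumr_eq0P (fun y _ => excess_ge0 u y u_nz)) /(_ x isT).
by lia.
Qed.

Lemma apn_pair (p q : F) : p != q ->
  #|[set z | g z + g (z + (p + q)) == g p + g q]| = 2%N.
Proof.
move=> pq; have pq_nz : p + q != 0 by rewrite eqF_add0.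
by have := ab_apn p pq_nz; rewrite /ndiff addrA addxx add0r.
Qed.

Lemma apn_triple (p q r : F) : p != q -> p != r -> q != r ->
  g p + g q + g r + g (p + q + r) != 0.
Proof.
move=> pq pr qr; apply/negP => /eqP g_sum0.
have /subset_leq_card : [set p; q; r] \subset
    [set z | g z + g (z + (p + q)) == g p + g q].
  apply/subsetP => z; rewrite !inE -orbA => /or3P [] /eqP ->.
  - by rewrite addrA addxx add0r.
  - by rewrite addrCA addxx addr0 addrC.
  - by rewrite eq_sym -eqF_add0 addrA (addrC r) g_sum0.
by rewrite apn_pair // -setUA !cardsU1 cards1 !inE (negbTE pq) (negbTE pr) (negbTE qr).
Qed.

(** * The code D: parametrisation and block counts *)

Section CodeD.
Variable A : {set F}.
Hypotheses (g0 : g 0 = 0) (A0 : 0 \in A)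
  (AD : forall x y, x \in A -> y \in A -> x + y \in A).

Lemma cwD (a b a' b' : F) : cw m g a b + cw m g a' b' = cw m g (a + a') (b + b').
Proof. by apply/ffunP => i; rewrite !ffunE -tr2D; congr (tr2 m _); ring. Qed.

Lemma code_gA_linear : linear_code (code_gA m g A).
Proof.
split.
  have -> : 0 = cw m g 0 0 by apply/ffunP => i; rewrite !ffunE !mul0r addr0 tr2_0.
  exact: imset2_f.
move=> _ _ /imset2P [a b aA _ ->] /imset2P [a' b' a'A _ ->].
by rewrite cwD; apply: imset2_f => //; apply: AD.
Qed.

Definition extend_adj (w : word (option (nzF F))) : word (nzF F) :=
  [ffun i => w (Some i) + w None].

Lemma dotw_extend (x : word (nzF F)) (w : word (option (nzF F))) :
  dotw (extend_word x) w = dotw x (extend_adj w).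
Proof.
rewrite /dotw big_option ffunE mulr_suml -big_split /=.
by apply: eq_bigr => i _; rewrite !ffunE mulrDr addrC.
Qed.

Lemma mem_code_D (w : word (option (nzF F))) :
  (w \in code_D m g A) = (extend_adj w \in code_gA m g A).
Proof.
rewrite /code_D -{2}(dual_codeK code_gA_linear) !inE.
apply/forall_inP/forall_inP => [Dw x xC | Cw _ /imsetP [x xC ->]].
  by rewrite -dotw_extend; apply: Dw; apply: imset_f.
by rewrite dotw_extend; apply: Cw.
Qed.

(* Coordinates of [code_D]: [None] is the parity coordinate, matching the point 0 of F. *)
Definition pointF (o : option (nzF F)) : F := if o is Some x then val x else 0.

Lemma pointFK : cancel pointF insub.
Proof. by case=> [i|] /=; [exact: valK | rewrite insubF // eqxx]. Qed.

Lemma insubK_pointF (x : F) : pointF (insub x) = x.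
Proof. by case: insubP => [y _ <- //|/negPn/eqP ->]. Qed.

Lemma pointF_eq (p q : option (nzF F)) : (pointF p == pointF q) = (p == q).
Proof. exact/inj_eq/can_inj/pointFK. Qed.

Lemma sum_pointF (f : F -> int) : \sum_o f (pointF o) = \sum_x f x.
Proof.
rewrite [RHS](reindex pointF) //.
by exists insub => [o _|x _]; [exact: pointFK | exact: insubK_pointF].
Qed.

Lemma card_points : #|{: option (nzF F)}| = #|F|.
Proof. by rewrite card_option card_sig cardC1 prednK // n_gt0. Qed.

Definition dword (tau : F * F * 'F_2) : word (option (nzF F)) :=
  [ffun o => tr2 m (tau.1.1 * g (pointF o) + tau.1.2 * pointF o) + tau.2].

Definition params : {set F * F * 'F_2} := [set tau | tau.1.1 \in A].

Lemma extend_adj_dword a b t : extend_adj (dword (a, b, t)) = cw m g a b.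
Proof.
apply/ffunP => i; rewrite !ffunE /= g0 !mulr0 addr0 tr2_0 add0r.
by rewrite -addrA (addrr_pchar2 pchar2_F2) addr0.
Qed.

Lemma code_DE : code_D m g A = dword @: params.
Proof.
apply/setP => w; rewrite mem_code_D.
apply/imset2P/imsetP => [[a b aA _ Cw]|[[[a b] t]]]; last first.
  by rewrite inE /= => aA ->; rewrite extend_adj_dword; exists a b.
exists (a, b, w None); first by rewrite inE.
apply/ffunP => o; rewrite ffunE /=; case: o => [i|] /=.
  have := congr1 (fun c : word (nzF F) => c i) Cw; rewrite !ffunE => <-.
  by rewrite -addrA (addrr_pchar2 pchar2_F2) addr0.
by rewrite g0 !mulr0 addr0 tr2_0 add0r.
Qed.

Lemma dword_inj : injective dword.
Proof.
move=> [[a b] t] [[a' b'] t'] eq_w.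
have tt' : t = t'.
  by have := congr1 (fun w : word _ => w None) eq_w; rewrite !ffunE /= g0 !mulr0 !addr0 tr2_0 !add0r.
have chi_eq x : chi (a * g x + b * x) = chi (a' * g x + b' * x).
  have := congr1 (fun w : word _ => w (insub x)) eq_w.
  by rewrite !ffunE /= insubK_pointF tt' => /addIr eq_tr; rewrite -!sgn2_tr2 eq_tr.
have /walsh_eq_n [] : W (a + a') (b + b') = n.
  rewrite /walsh (eq_bigr (fun _ => 1)) => [|x _]; first by rewrite sumF_const mul1r.
  have -> : (a + a') * g x + (b + b') * x = (a * g x + b * x) + (a' * g x + b' * x) by ring.
  by rewrite -/(chi _) chiD chi_eq chi_sqr.
by move/eqP; rewrite eqF_add0 => /eqP -> /eqP; rewrite eqF_add0 => /eqP ->; rewrite tt'.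
Qed.

Lemma wt_dword a b t : n - 2 * (wt (dword (a, b, t)))%:Z = sgn2 t * W a b.
Proof.
rewrite /wt /Defs.support card_setZ.
transitivity (\sum_o sgn2 (dword (a, b, t) o)).
  under [RHS]eq_bigr => o _ do rewrite sgn2E.
  by rewrite sumrB -mulr_sumr sumr_const card_points -(natz #|F|).
under eq_bigr => o _ do rewrite ffunE sgn2D sgn2_tr2 /=.
by rewrite -mulr_suml mulrC (sum_pointF (fun x => chi (a * g x + b * x))).
Qed.

Lemma card_code_D (Q : pred (word (option (nzF F)))) :
  #|[set c in code_D m g A | Q c]| = #|[set tau in params | Q (dword tau)]|.
Proof.
rewrite code_DE -(card_imset _ dword_inj); apply: eq_card => c.
rewrite inE; apply/andP/imsetP => [[/imsetP [tau tauP ->] Qc]|[tau]].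
  by exists tau => //; rewrite inE tauP.
by rewrite inE => /andP [tauP Qt] ->; split => //; apply: imset_f.
Qed.

Local Notation c0 v := ((v == 0)%:Z).
Local Notation cp v := ((v == s)%:Z).
Local Notation cm v := ((v == - s)%:Z).

Definition bias (tau : F * F * 'F_2) : int := sgn2 tau.2 * W tau.1.1 tau.1.2.

Lemma wt_dword_eq tau k : (wt (dword tau) == k) = (bias tau == n - 2 * k%:Z).
Proof.
case: tau => [[a b] t]; rewrite /bias -wt_dword.
by apply/eqP/eqP => [-> //|/addrI/oppr_inj/(mulfI (isT : (2 : int) != 0)) []].
Qed.

(* The indicator of [p \in support c] is [(1 - (-1)^(c p)) / 2]; expanding the product over
   the points of S writes the number of blocks through S as a signed sum of [wsum j G P v],
   where [G], [P] are the sums of [g x], [x] over a subset of S and [j] is its parity. *)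
Definition wsum_at (j : bool) (G P : F) (v : int) (a : F) : int :=
  \sum_b \sum_t (bias (a, b, t) == v)%:Z * sgn2 t ^+ j * chi (a * G + b * P).

Definition wsum (j : bool) (G P : F) (v : int) : int :=
  \sum_(tau in params) (bias tau == v)%:Z * sgn2 tau.2 ^+ j * chi (tau.1.1 * G + tau.1.2 * P).

Lemma wsum_split j G P v :
  wsum j G P v = wsum_at j G P v 0 + \sum_(a in A | a != 0) wsum_at j G P v a.
Proof.
rewrite /wsum -(bigD1 _ A0) pair_big pair_big /=.
by apply: eq_big => [[[a b] t]|[[a b] t] _] //=; rewrite inE /= !andbT.
Qed.

Lemma wsum_at0 j G P v :
  wsum_at j G P v 0 = (v == n)%:Z + (-1) ^+ j * (v == - n)%:Z
                      + c0 v * (if j then 0 else 2) * ((if P == 0 then n else 0) - 1).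
Proof.
rewrite /wsum_at (bigD1 0) //=; congr (_ + _).
  under eq_bigr => t _ do rewrite /bias /= walsh0 eqxx !mul0r addr0 chi0 mulr1.
  by rewrite big_F2 sgn2_0 sgn2_1 mul1r mulN1r expr1n mulr1 mulrC ![_ == v]eq_sym.
rewrite -sum_neq0_chi mulr_sumr; apply: eq_bigr => b b_nz.
under eq_bigr => t _ do rewrite /bias /= walsh0 (negbTE b_nz) mulr0 mul0r add0r.
by rewrite -mulr_suml big_F2 sgn2_0 sgn2_1 eq_sym; case: j => /=; ring.
Qed.

Lemma wsum_at_odd G P v a : a != 0 ->
  s * wsum_at true G P v a = (cp v - cm v) * n * chi (a * (G + g P)).
Proof.
move=> a_nz; rewrite /wsum_at mulr_sumr.
transitivity (\sum_b (cp v - cm v) * chi (a * G) * (W a b * chi (b * P))).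
  apply: eq_bigr => b _; rewrite -mulr_suml mulrA.
  under eq_bigr => t _ do rewrite expr1 /bias /=.
  by rewrite sum_sgn2_indicator_odd ?walsh_vals // chiD; ring.
under eq_bigr => b _ do rewrite walsh_fourier.
by rewrite -mulr_sumr fourierK mulrDr chiD; ring.
Qed.

Lemma wsum_at_even G P v a : a != 0 ->
  s * s * wsum_at false G P v a =
  chi (a * G) * (2 * s * s * c0 v * (if P == 0 then n else 0) +
                 (cp v + cm v - 2 * c0 v) * n * autocorr a P).
Proof.
move=> a_nz; rewrite /wsum_at mulr_sumr.
transitivity (\sum_b chi (a * G) * (2 * s * s * c0 v * chi (b * P) +
   (cp v + cm v - 2 * c0 v) * (fourier (autocorr a) b * chi (b * P)))).
  apply: eq_bigr => b _; rewrite -mulr_suml mulrA.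
  under eq_bigr => t _ do rewrite expr0 mulr1 /bias /=.
  by rewrite sum_sgn2_indicator_even ?walsh_vals // -walsh_sqr chiD; ring.
by rewrite -mulr_sumr big_split /= -!mulr_sumr sum_chi_mul fourierK; ring.
Qed.

Lemma sum_A_neq0_const (c : int) : \sum_(a in A | a != 0) c = c * (#|A|%:Z - 1).
Proof.
rewrite sumr_const -[c *+ _]mulr_natr natz; congr (_ * _).
have := cardsD1 0 A; rewrite A0 (@eq_card _ _ (A :\ 0)) => [|a]; last by rewrite !inE andbC.
by move=> ->; rewrite add1n -addn1 PoszD addrK.
Qed.

Lemma wsum_count v : s * s * wsum false 0 0 v =
  s * s * ((v == n)%:Z + (v == - n)%:Z + c0 v * 2 * (n - 1)) +
  (#|A|%:Z - 1) * (2 * s * s * c0 v * n + (cp v + cm v - 2 * c0 v) * n * n).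
Proof.
rewrite wsum_split mulrDr wsum_at0 eqxx expr0 mul1r; congr (_ + _).
rewrite mulr_sumr [RHS]mulrC -sum_A_neq0_const; apply: eq_bigr => a /andP [_ a_nz].
by rewrite wsum_at_even // mulr0 chi0 autocorr0 eqxx; ring.
Qed.

Lemma wsum_single v x : s * wsum true (g x) x v =
  s * ((v == n)%:Z - (v == - n)%:Z) + (#|A|%:Z - 1) * ((cp v - cm v) * n).
Proof.
rewrite wsum_split mulrDr wsum_at0 /= expr1 mulN1r mulr0 mul0r addr0; congr (_ + _).
rewrite mulr_sumr [RHS]mulrC -sum_A_neq0_const; apply: eq_bigr => a /andP [_ a_nz].
by rewrite wsum_at_odd // addxx mulr0 chi0 mulr1.
Qed.

Lemma sum_setT_neq0 (f : F -> int) : A = setT ->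
  \sum_(a in A | a != 0) f a = \sum_(a | a != 0) f a.
Proof. by move=> ->; apply: eq_bigl => a; rewrite in_setT. Qed.

Lemma wsum_pair v x y : A = setT -> x != y ->
  s * s * wsum false (g x + g y) (x + y) v =
  s * s * ((v == n)%:Z + (v == - n)%:Z - 2 * c0 v) + (cp v + cm v - 2 * c0 v) * n * n.
Proof.
move=> AT xy; have xy_nz : (x + y == 0) = false by apply/negbTE; rewrite eqF_add0.
rewrite wsum_split mulrDr wsum_at0 xy_nz expr0 mul1r sum_setT_neq0 // mulr_sumr.
under eq_bigr => a a_nz do rewrite wsum_at_even // xy_nz mulr0 add0r mulrCA.
rewrite -mulr_sumr.
have -> : \sum_(a | a != 0) chi (a * (g x + g y)) * autocorr a (x + y) = n.
  under eq_bigr => a _ do rewrite autocorrE mulr_sumr.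
  rewrite exchange_big /=.
  under eq_bigr => z _ do under eq_bigr => a _ do rewrite -chiD -mulrDr.
  under eq_bigr => z _ do rewrite sum_neq0_chi eqF_add0 eq_sym.
  rewrite sumrB sumF_const mul1r -big_mkcond /= sumr_const.
  by have := apn_pair xy; rewrite cardsE => ->; rewrite mulr2n addrK.
ring.
Qed.

Lemma wsum_triple v x y z : A = setT -> x != y -> x != z -> y != z ->
  s * wsum true (g x + g y + g z) (x + y + z) v =
  s * ((v == n)%:Z - (v == - n)%:Z) - (cp v - cm v) * n.
Proof.
move=> AT xy xz yz.
rewrite wsum_split mulrDr wsum_at0 /= expr1 mulN1r mulr0 mul0r addr0 sum_setT_neq0 // mulr_sumr.
under eq_bigr => a a_nz do rewrite wsum_at_odd //.
by rewrite -mulr_sumr sum_neq0_chi (negbTE (apn_triple xy xz yz)); ring.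
Qed.

Lemma wdist_code_D_wsum k : (wdist (code_D m g A) k)%:Z = wsum false 0 0 (n - 2 * k%:Z).
Proof.
rewrite /wdist card_code_D card_setIdZ; apply: eq_bigr => tau _.
by rewrite wt_dword_eq !mulr0 addr0 chi0 !mulr1.
Qed.

Lemma twice_neq0E (z : 'F_2) : 2 * (z != 0)%:Z = 1 - sgn2 z.
Proof. by rewrite sgn2E; ring. Qed.

Lemma blocks_through1 k p (x := pointF p) (v := n - 2 * k%:Z) :
  s * s * (2 * #|[set b in blocks (code_D m g A) k | [set p] \subset b]|%:Z) =
  s * s * wsum false 0 0 v - s * (s * wsum true (g x) x v).
Proof.
rewrite [s * (s * _)]mulrA -mulrBr; congr (_ * _).
rewrite card_blocks_supset card_code_D card_setIdZ /wsum -sumrB mulr_sumr.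
apply: eq_bigr => -[[a b] t] _.
rewrite wt_dword_eq sub1set inE -mulnb PoszM mulrCA twice_neq0E ffunE sgn2D sgn2_tr2 /=.
by rewrite !mulr0 addr0 chi0; ring.
Qed.

Lemma blocks_through3 k p q r (x := pointF p) (y := pointF q) (z := pointF r)
    (v := n - 2 * k%:Z) :
  s * s * (8 * #|[set b in blocks (code_D m g A) k | [set p; q; r] \subset b]|%:Z) =
  s * s * wsum false 0 0 v - s * (s * wsum true (g x) x v) - s * (s * wsum true (g y) y v)
  - s * (s * wsum true (g z) z v) + s * s * wsum false (g x + g y) (x + y) v
  + s * s * wsum false (g x + g z) (x + z) v + s * s * wsum false (g y + g z) (y + z) v
  - s * (s * wsum true (g x + g y + g z) (x + y + z) v).
Proof.
rewrite ![s * (s * _)]mulrA -!mulrBr -!mulrDr -mulrBr; congr (_ * _).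
rewrite card_blocks_supset card_code_D card_setIdZ /wsum -!sumrB -!big_split -sumrB mulr_sumr.
apply: eq_bigr => -[[a b] t] _ /=.
rewrite wt_dword_eq !subUset !sub1set !inE -!mulnb !PoszM.
set c := (bias _ == v)%:Z.
transitivity (c * ((2 * (dword (a, b, t) p != 0)%:Z) * (2 * (dword (a, b, t) q != 0)%:Z)
   * (2 * (dword (a, b, t) r != 0)%:Z))); first ring.
rewrite !twice_neq0E !ffunE !sgn2D !sgn2_tr2 /= !mulr0 addr0 chi0 -/x -/y -/z.
have chi2 u w : chi (a * (g u + g w) + b * (u + w)) = chi (a * g u + b * u) * chi (a * g w + b * w).
  by rewrite -chiD; congr chi; ring.
have chi3 u w o : chi (a * (g u + g w + g o) + b * (u + w + o)) =
    chi (a * g u + b * u) * chi (a * g w + b * w) * chi (a * g o + b * o).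
  by rewrite -!chiD; congr chi; ring.
rewrite chi3 !chi2.
by case: (F2_cases t) => ->; rewrite ?sgn2_0 ?sgn2_1; ring.
Qed.

Lemma ss_neq0 : s * s != 0.
Proof. by rewrite s_sqr; have := n_gt0; lia. Qed.

Lemma blocks_through1_uniform k (S S' : {set option (nzF F)}) :
  #|S| = 1%N -> #|S'| = 1%N ->
  #|[set b in blocks (code_D m g A) k | S \subset b]| =
  #|[set b in blocks (code_D m g A) k | S' \subset b]|.
Proof.
move=> /eqP/cards1P [p ->] /eqP/cards1P [p' ->]; apply/eqP; rewrite -eqz_nat; apply/eqP.
apply: (mulfI (isT : (2 : int) != 0)); apply: (mulfI ss_neq0).
by rewrite !blocks_through1 !wsum_single.
Qed.

Lemma blocks_through3_uniform k : A = setT -> forall S S' : {set option (nzF F)},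
  #|S| = 3%N -> #|S'| = 3%N ->
  #|[set b in blocks (code_D m g A) k | S \subset b]| =
  #|[set b in blocks (code_D m g A) k | S' \subset b]|.
Proof.
move=> AT _ _ /cards3P [p [q [r [pq pr qr ->]]]] /cards3P [p' [q' [r' [pq' pr' qr' ->]]]].
apply/eqP; rewrite -eqz_nat; apply/eqP.
apply: (mulfI (isT : (8 : int) != 0)); apply: (mulfI ss_neq0).
by rewrite !blocks_through3 !wsum_single !wsum_pair ?pointF_eq // !wsum_triple ?pointF_eq.
Qed.

Lemma wdist_code_D_val k (v := n - 2 * k%:Z) :
  (wdist (code_D m g A) k)%:Z =
  (v == n)%:Z + (v == - n)%:Z + 2 * c0 v * (n - 1) +
  (#|A|%:Z - 1) * (2 * c0 v * n + (cp v + cm v - 2 * c0 v) * (2 ^ m.-1)%N%:Z).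
Proof.
apply: (mulfI ss_neq0); rewrite wdist_code_D_wsum wsum_count -/v -(mulrA 2 s s) s_sqr.
have -> : n = 2 * (2 ^ m.-1)%N%:Z by rewrite cardF -{1}(prednK m_gt0) expnS PoszM.
ring.
Qed.

Lemma wdist_code_D r : #|A| = (2 ^ r)%N -> forall k,
  wdist (code_D m g A) k =
    (if k == 0 then 1
     else if k == 2 ^ m.-1 - 2 ^ ((m - 1) %/ 2) then 2 ^ m.-1 * (2 ^ r - 1)
     else if k == 2 ^ m.-1 then 2 ^ (m + r) + 2 ^ m - 2
     else if k == 2 ^ m.-1 + 2 ^ ((m - 1) %/ 2) then 2 ^ m.-1 * (2 ^ r - 1)
     else if k == 2 ^ m then 1
     else 0)%N.
Proof.
move=> cardA k; apply/eqP; rewrite -eqz_nat; apply/eqP.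
have pow_m : (2 ^ m = 2 * 2 ^ m.-1)%N by rewrite -{1}(prednK m_gt0) expnS.
have half_m : (m.+1 %/ 2 = ((m - 1) %/ 2).+1)%N by have := modn2 m; rewrite m_odd; lia.
rewrite wdist_code_D_val cardA cardF half_m expnD pow_m expnS.
apply: (weight_distribution_arith (N2 := 2 ^ m.-1) (H := 2 ^ ((m - 1) %/ 2))); last exact: expn_gt0.
by rewrite expn_gt0 ltn_exp2l //; lia.
Qed.

Lemma code_D_design3 k : A = setT -> forall S : {set option (nzF F)}, #|S| = 3%N ->
  (#|[set b in blocks (code_D m g A) k | S \subset b]|%:R : rat) =
    (k * (k - 1) * (k - 2) * wdist (code_D m g A) k)%:R /
    (2 ^ m * (2 ^ m - 1) * (2 ^ m - 2))%:R.
Proof.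
move=> AT S S3.
have := design_double_count (@blocks_card _ _ k) (blocks_through3_uniform k AT) S3.
rewrite card_points card_blocks cardF => count.
apply: natr_divE; last by rewrite !ffact3E; lia.
have : (8 <= 2 ^ m)%N by rewrite (_ : 8 = 2 ^ 3)%N // leq_exp2l.
by rewrite !muln_gt0 !subn_gt0 expn_gt0 /=; lia.
Qed.

Lemma code_D_design1 k : forall S : {set option (nzF F)}, #|S| = 1%N ->
  (#|[set b in blocks (code_D m g A) k | S \subset b]|%:R : rat) =
    (k * wdist (code_D m g A) k)%:R / (2 ^ m)%:R.
Proof.
move=> S S1.
have := design_double_count (@blocks_card _ _ k) (blocks_through1_uniform k) S1.
rewrite card_points card_blocks cardF !bin1 => count.
by apply: natr_divE; [rewrite expn_gt0 | rewrite count mulnC].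
Qed.

End CodeD.
End AlmostBent.
End CharTwoField.

Theorem theorem6 (F : finFieldType) (m r : nat) (g : F -> F) (A : {set F}) :
  (3 <= m)%N -> odd m -> #|F| = (2 ^ m)%N ->
  almost_bent m g -> g 0 = 0 ->
  0 \in A -> (forall x y, x \in A -> y \in A -> x + y \in A) ->
  #|A| = (2 ^ r)%N -> (1 <= r <= m)%N ->
  let D := code_D m g A in
  let h := ((m - 1) %/ 2)%N in
  (forall k : nat,
     wdist D k =
       (if k == 0%N then 1
        else if k == (2 ^ m.-1 - 2 ^ h)%N then 2 ^ m.-1 * (2 ^ r - 1)
        else if k == (2 ^ m.-1)%N then 2 ^ (m + r) + 2 ^ m - 2
        else if k == (2 ^ m.-1 + 2 ^ h)%N then 2 ^ m.-1 * (2 ^ r - 1)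
        else if k == (2 ^ m)%N then 1
        else 0)%N) /\
  (forall k : nat, wdist D k <> 0%N ->
     let B := blocks D k in
     (forall b, b \in B -> #|b| = k) /\
     (r = m ->
        forall S : {set option (nzF F)}, #|S| = 3%N ->
          (#|[set b in B | S \subset b]|%:R : rat) =
            (k * (k - 1) * (k - 2) * wdist D k)%:R /
            (2 ^ m * (2 ^ m - 1) * (2 ^ m - 2))%:R) /\
     (r <> m ->
        forall S : {set option (nzF F)}, #|S| = 1%N ->
          (#|[set b in B | S \subset b]|%:R : rat) =
            (k * wdist D k)%:R / (2 ^ m)%:R)).
Proof.
move=> m_gt2 m_odd cardF g_ab g0 A0 AD cardA _ D h.
have m_gt0 : (0 < m)%N by apply: ltnW (ltnW m_gt2).
split=> [|k _ B]; first exact: wdist_code_D cardA.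
split; first exact: blocks_card.
split=> [r_m|_]; last exact: code_D_design1.
apply: code_D_design3 => //.
by apply/eqP; rewrite eqEcard subsetT cardsT cardA r_m cardF leqnn.
Qed.
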